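(* In the setting of the blurring mean-shift iteration with $f$ PDD and fixed positive weights, let $r_M=\max_{i,j}\|x_i-x_j\|$ and write $f(u)=\varphi(\|u\|)$. If $\varphi(r_M)>0$, then there exists $c\in\mathbb{R}^p$ such that $\lim_{t\to\infty}x_i^{(t)}=c$ for all $i=1,\dots,N$.
   Context: Setting: $x_1,\dots,x_N\in\mathbb{R}^p$, fixed weights $w_1,\dots,w_N>0$, and $f:\mathbb{R}^p\to[0,1]$ PDD, meaning: $f(u)=1$ iff $u=0$; $f(u)=\varphi(\|u\|)$ for some $\varphi:[0,\infty)\to[0,1]$; $\varphi$ is decreasing (non-increasing). The blurring mean-shift iteration is $x_i^{(0)}=x_i$ and $x_i^{(t+1)}=\frac{\sum_{j=1}^N f(x_i^{(t)}-x_j^{(t)})w_jx_j^{(t)}}{\sum_{j=1}^N f(x_i^{(t)}-x_j^{(t)})w_j}$. *)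

From Stdlib Require Import Reals.
Open Scope R_scope.

(* A point of R^p is represented by a function [nat -> R]; only the
   coordinates [k < p] are meaningful. *)
Definition vec := nat -> R.

Fixpoint sumN (n : nat) (g : nat -> R) : R :=
  match n with
  | O => 0
  | S m => sumN m g + g m
  end.

Fixpoint maxN (n : nat) (g : nat -> R) : R :=
  match n with
  | O => 0
  | S m => Rmax (maxN m g) (g m)
  end.

Definition vsub (u v : vec) : vec := fun k => u k - v k.

Definition norm (p : nat) (u : vec) : R := sqrt (sumN p (fun k => u k ^ 2)).

Definition PDD (p : nat) (phi : R -> R) : Prop :=
  (forall a, 0 <= a -> 0 <= phi a <= 1) /\
  (forall a b, 0 <= a -> a <= b -> phi b <= phi a) /\
  (forall u : vec, phi (norm p u) = 1 <-> (forall k, (k < p)%nat -> u k = 0)).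

Definition kernel (p : nat) (phi : R -> R) (u : vec) : R := phi (norm p u).

Fixpoint bms (p N : nat) (w : nat -> R) (phi : R -> R) (x : nat -> vec)
    (t : nat) : nat -> vec :=
  match t with
  | O => x
  | S t' =>
      let y := bms p N w phi x t' in
      fun i k =>
        sumN N (fun j => kernel p phi (vsub (y i) (y j)) * w j * y j k) /
        sumN N (fun j => kernel p phi (vsub (y i) (y j)) * w j)
  end.

Definition rM (p N : nat) (x : nat -> vec) : R :=
  maxN N (fun i => maxN N (fun j => norm p (vsub (x i) (x j)))).

From Pilot Require Import Defs.
From Stdlib Require Import Reals Lra Lia.
Open Scope R_scope.

(* Write y_i^(t) for the iterates.  Each step replaces every point by a
   convex combination  y_i^(t+1) = sum_j a_ij y_j^(t)  with normalized
   weights  a_ij = f(y_i - y_j) w_j / sum_l f(y_i - y_l) w_l.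

   1. Convex averaging never increases the diameter (via Jensen's
      inequality for the square), so all pairwise distances stay below
      r_M for every t.
   2. Hence every kernel value is at least phi(r_M) > 0, and every weight
      a_ij is at least  d = phi(r_M) * min_j w_j / sum_j w_j > 0.
   3. An averaging step whose weights are all >= d maps every coordinate
      into a range that is (1 - d) times smaller and nested in the old one.
      The lower ends of these ranges increase to a limit c_k, and every
      coordinate is within (1-d)^t * (initial range) of c_k.
   4. Summing over the p coordinates, ||y_i^(t) - c|| <= C (1-d)^t -> 0. *)

Lemma sumN_ext n f g :
  (forall j, (j < n)%nat -> f j = g j) -> sumN n f = sumN n g.
Proof.
  induction n as [|n IH]; intros H; simpl; [reflexivity|].
  rewrite IH by (intros; apply H; lia). rewrite H by lia; reflexivity.
Qed.

Lemma sumN_scal n c g : sumN n (fun j => c * g j) = c * sumN n g.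
Proof. induction n as [|n IH]; simpl; [ring|]. rewrite IH; ring. Qed.

Lemma sumN_add n f g : sumN n (fun j => f j + g j) = sumN n f + sumN n g.
Proof. induction n as [|n IH]; simpl; [ring|]. rewrite IH; ring. Qed.

Lemma sumN_const n c : sumN n (fun _ => c) = INR n * c.
Proof. induction n as [|n IH]; simpl sumN; [simpl; ring|]. rewrite IH, S_INR; ring. Qed.

Lemma sumN_le n f g :
  (forall j, (j < n)%nat -> f j <= g j) -> sumN n f <= sumN n g.
Proof.
  induction n as [|n IH]; intros H; simpl; [lra|].
  apply Rplus_le_compat; [apply IH; intros j Hj|]; apply H; lia.
Qed.

Lemma sumN_nonneg n g : (forall j, (j < n)%nat -> 0 <= g j) -> 0 <= sumN n g.
Proof.
  intros H. apply Rle_trans with (sumN n (fun _ => 0)).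
  - rewrite sumN_const; lra.
  - now apply sumN_le.
Qed.

Lemma sumN_term_le n g j :
  (forall j, (j < n)%nat -> 0 <= g j) -> (j < n)%nat -> g j <= sumN n g.
Proof.
  induction n as [|n IH]; intros H Hj; simpl; [lia|].
  destruct (Nat.eq_dec j n) as [->|Hne].
  - assert (0 <= sumN n g) by (apply sumN_nonneg; intros; apply H; lia). lra.
  - assert (g j <= sumN n g) by (apply IH; [intros; apply H|]; lia).
    assert (0 <= g n) by (apply H; lia). lra.
Qed.

Lemma sumN_swap n m (f : nat -> nat -> R) :
  sumN n (fun j => sumN m (fun l => f j l)) = sumN m (fun l => sumN n (fun j => f j l)).
Proof.
  induction n as [|n IH]; simpl.
  - rewrite sumN_const; ring.
  - rewrite IH, <- sumN_add; reflexivity.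
Qed.

Definition wsum (n : nat) (a z : nat -> R) : R := sumN n (fun j => a j * z j).

Definition weights_ge (n : nat) (d : R) (a : nat -> R) : Prop :=
  (forall j, (j < n)%nat -> d <= a j) /\ sumN n a = 1.

Lemma wsum_ext n a z z' :
  (forall j, (j < n)%nat -> z j = z' j) -> wsum n a z = wsum n a z'.
Proof. intros H; apply sumN_ext; intros j Hj; rewrite H; auto. Qed.

Lemma weights_ge_nonneg n d a : 0 <= d -> weights_ge n d a -> weights_ge n 0 a.
Proof. intros Hd [Ha Hs]; split; [intros j Hj; specialize (Ha j Hj); lra|exact Hs]. Qed.

Lemma wsum_affine n a z u v :
  sumN n a = 1 -> wsum n a (fun j => u * z j + v) = u * wsum n a z + v.
Proof.
  intros Hs. unfold wsum.
  rewrite (sumN_ext n _ (fun j => u * (a j * z j) + v * a j)) by (intros; ring).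
  rewrite sumN_add, !sumN_scal, Hs; ring.
Qed.

Lemma wsum_ge_const n a z m :
  weights_ge n 0 a -> (forall j, (j < n)%nat -> m <= z j) -> m <= wsum n a z.
Proof.
  intros [Ha Hs] Hz.
  assert (H : 0 <= wsum n a (fun j => 1 * z j + - m)).
  { apply sumN_nonneg; intros j Hj. specialize (Ha j Hj); specialize (Hz j Hj). nra. }
  rewrite wsum_affine in H by exact Hs. lra.
Qed.

Lemma wsum_le_const n a z M :
  weights_ge n 0 a -> (forall j, (j < n)%nat -> z j <= M) -> wsum n a z <= M.
Proof.
  intros Ha Hz.
  assert (H : - M <= wsum n a (fun j => -1 * z j + 0)).
  { apply wsum_ge_const; [exact Ha|]. intros j Hj; specialize (Hz j Hj); lra. }
  rewrite wsum_affine in H by apply Ha. lra.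
Qed.

(* Jensen's inequality for the square: the variance is nonnegative. *)
Lemma jensen_sq n a z :
  weights_ge n 0 a -> (wsum n a z) ^ 2 <= wsum n a (fun j => z j ^ 2).
Proof.
  intros [Ha Hs]. set (s := wsum n a z).
  assert (Hvar : 0 <= wsum n a (fun j => (z j - s) ^ 2)).
  { apply sumN_nonneg; intros j Hj. apply Rmult_le_pos; [apply Ha; auto|apply pow2_ge_0]. }
  assert (Hexp : wsum n a (fun j => (z j - s) ^ 2)
                 = wsum n a (fun j => z j ^ 2) - 2 * s * s + s ^ 2).
  { unfold wsum.
    rewrite (sumN_ext n _ (fun j => a j * z j ^ 2 + (-2 * s * (a j * z j) + s ^ 2 * a j)))
      by (intros; ring).
    rewrite !sumN_add, !sumN_scal, Hs. fold (wsum n a z) s. ring. }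
  lra.
Qed.

Lemma wsum_diff n a b z :
  sumN n a = 1 -> sumN n b = 1 ->
  wsum n a z - wsum n b z = wsum n a (fun j => wsum n b (fun l => z j - z l)).
Proof.
  intros Ha Hb.
  transitivity (wsum n a (fun j => 1 * z j + - wsum n b z)).
  - rewrite wsum_affine by exact Ha; ring.
  - apply wsum_ext; intros j _.
    rewrite (wsum_ext n b (fun l => z j - z l) (fun l => -1 * z l + z j))
      by (intros; ring).
    rewrite wsum_affine by exact Hb; ring.
Qed.

Lemma wsum_le n a z z' :
  weights_ge n 0 a -> (forall j, (j < n)%nat -> z j <= z' j) -> wsum n a z <= wsum n a z'.
Proof.
  intros [Ha _] Hz. apply sumN_le; intros j Hj.
  apply Rmult_le_compat_l; [apply Ha|apply Hz]; exact Hj.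
Qed.

Lemma sumN_wsum_swap p n a (g : nat -> nat -> R) :
  sumN p (fun k => wsum n a (fun j => g j k)) = wsum n a (fun j => sumN p (g j)).
Proof.
  unfold wsum. rewrite sumN_swap. apply sumN_ext; intros j _.
  rewrite <- sumN_scal; reflexivity.
Qed.

Definition sqdist (p : nat) (u v : vec) : R := sumN p (fun k => (u k - v k) ^ 2).

Lemma norm_vsub p u v : norm p (vsub u v) = sqrt (sqdist p u v).
Proof. reflexivity. Qed.

Definition vavg (n : nat) (a : nat -> R) (y : nat -> vec) : vec :=
  fun k => wsum n a (fun j => y j k).

(* Two barycenters of a point family are no farther apart than the
   family's diameter: this is why the iteration never expands. *)
Lemma vavg_sqdist_le p n a b (y : nat -> vec) D :
  weights_ge n 0 a -> weights_ge n 0 b ->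
  (forall j l, (j < n)%nat -> (l < n)%nat -> sqdist p (y j) (y l) <= D) ->
  sqdist p (vavg n a y) (vavg n b y) <= D.
Proof.
  intros Ha Hb HD.
  apply Rle_trans with
    (sumN p (fun k => wsum n a (fun j => wsum n b (fun l => (y j k - y l k) ^ 2)))).
  - apply sumN_le; intros k _. unfold vavg.
    rewrite wsum_diff by (apply Ha || apply Hb).
    eapply Rle_trans; [apply jensen_sq, Ha|].
    apply wsum_le; [exact Ha|]. intros j _. apply jensen_sq, Hb.
  - rewrite sumN_wsum_swap.
    apply wsum_le_const; [exact Ha|]. intros j Hj.
    rewrite (sumN_wsum_swap p n b (fun l k => (y j k - y l k) ^ 2)).
    apply wsum_le_const; [exact Hb|]. intros l Hl. now apply HD.
Qed.

Fixpoint maxS (n : nat) (g : nat -> R) : R :=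
  match n with O => g O | S m => Rmax (maxS m g) (g (S m)) end.

Fixpoint minS (n : nat) (g : nat -> R) : R :=
  match n with O => g O | S m => Rmin (minS m g) (g (S m)) end.

Lemma maxS_ge n g j : (j < S n)%nat -> g j <= maxS n g.
Proof.
  induction n as [|n IH]; intros Hj; simpl.
  - replace j with O by lia; lra.
  - destruct (Nat.eq_dec j (S n)) as [->|Hne]; [apply Rmax_r|].
    eapply Rle_trans; [apply IH; lia|apply Rmax_l].
Qed.

Lemma minS_le n g j : (j < S n)%nat -> minS n g <= g j.
Proof.
  induction n as [|n IH]; intros Hj; simpl.
  - replace j with O by lia; lra.
  - destruct (Nat.eq_dec j (S n)) as [->|Hne]; [apply Rmin_r|].
    eapply Rle_trans; [apply Rmin_l|apply IH; lia].
Qed.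

Lemma minS_attained n g : exists j, (j < S n)%nat /\ minS n g = g j.
Proof.
  induction n as [|n [j [Hj E]]]; simpl; [exists O; split; [lia|reflexivity]|].
  unfold Rmin; destruct (Rle_dec (minS n g) (g (S n))).
  - exists j; split; [lia|exact E].
  - exists (S n); split; [lia|reflexivity].
Qed.

Lemma maxS_attained n g : exists j, (j < S n)%nat /\ maxS n g = g j.
Proof.
  induction n as [|n [j [Hj E]]]; simpl; [exists O; split; [lia|reflexivity]|].
  unfold Rmax; destruct (Rle_dec (maxS n g) (g (S n))).
  - exists (S n); split; [lia|reflexivity].
  - exists j; split; [lia|exact E].
Qed.

Lemma minS_le_maxS n g : minS n g <= maxS n g.
Proof. apply Rle_trans with (g O); [apply minS_le|apply maxS_ge]; lia. Qed.

(* An average whose weights are all >= d stays a fraction d of the range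
   below the maximum (the weight on the minimal value pulls it down). *)
Lemma wsum_le_top n d a z :
  0 <= d -> weights_ge (S n) d a ->
  wsum (S n) a z <= maxS n z - d * (maxS n z - minS n z).
Proof.
  intros Hd Ha. set (M := maxS n z). set (m := minS n z).
  destruct (minS_attained n z) as [j0 [Hj0 Ej0]]. fold m in Ej0.
  assert (Hpos : forall j, (j < S n)%nat -> 0 <= a j * (M - z j)).
  { intros j Hj. apply Rmult_le_pos.
    - apply (proj1 (weights_ge_nonneg _ _ _ Hd Ha)); exact Hj.
    - assert (z j <= M) by (apply maxS_ge; exact Hj). lra. }
  assert (Hpull : a j0 * (M - z j0) <= wsum (S n) a (fun j => -1 * z j + M)).
  { rewrite (wsum_ext _ _ _ (fun j => M - z j)) by (intros; ring).
    exact (sumN_term_le (S n) (fun j => a j * (M - z j)) j0 Hpos Hj0). }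
  rewrite wsum_affine in Hpull by apply Ha.
  assert (d * (M - m) <= a j0 * (M - m)).
  { pose proof (minS_le_maxS n z) as HmM. fold M m in HmM.
    apply Rmult_le_compat_r; [lra|apply Ha; exact Hj0]. }
  rewrite <- Ej0 in Hpull. lra.
Qed.

Definition averaging_step (n : nat) (d : R) (z z' : nat -> R) : Prop :=
  forall i, (i < S n)%nat -> exists a, weights_ge (S n) d a /\ z' i = wsum (S n) a z.

Lemma averaging_step_range n d z z' :
  0 <= d -> averaging_step n d z z' ->
  minS n z <= minS n z' /\ maxS n z' <= maxS n z /\
  maxS n z' - minS n z' <= (1 - d) * (maxS n z - minS n z).
Proof.
  intros Hd Hstep.
  assert (Hin : forall i, (i < S n)%nat ->
            minS n z <= z' i <= maxS n z - d * (maxS n z - minS n z)).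
  { intros i Hi. destruct (Hstep i Hi) as [a [Ha ->]]. split.
    - apply wsum_ge_const; [apply (weights_ge_nonneg _ d); assumption|].
      intros j Hj; apply minS_le; exact Hj.
    - apply wsum_le_top; assumption. }
  destruct (maxS_attained n z') as [i0 [Hi0 ->]].
  destruct (minS_attained n z') as [i1 [Hi1 ->]].
  pose proof (Hin i0 Hi0). pose proof (Hin i1 Hi1). pose proof (minS_le_maxS n z).
  repeat split; nra.
Qed.

Lemma Un_cv_const (c : R) : Un_cv (fun _ => c) c.
Proof.
  intros eps Heps. exists O. intros t _.
  unfold R_dist. rewrite Rminus_diag_eq, Rabs_R0 by reflexivity. exact Heps.
Qed.

Lemma scalar_consensus n d (z : nat -> nat -> R) :
  0 < d <= 1 -> (forall t, averaging_step n d (z t) (z (S t))) ->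
  { c : R | forall t i, (i < S n)%nat ->
      Rabs (z t i - c) <= (1 - d) ^ t * (maxS n (z O) - minS n (z O)) }.
Proof.
  intros Hd Hstep.
  set (m := fun t => minS n (z t)). set (M := fun t => maxS n (z t)).
  assert (Hrange : forall t, m t <= m (S t) /\ M (S t) <= M t /\
                     M (S t) - m (S t) <= (1 - d) * (M t - m t))
    by (intros t; apply averaging_step_range; [lra|apply Hstep]).
  assert (Hgap : forall t, M t - m t <= (1 - d) ^ t * (M O - m O)).
  { induction t as [|t IH]; simpl; [lra|].
    destruct (Hrange t) as [_ [_ Ht]]. rewrite Rmult_assoc.
    apply Rle_trans with ((1 - d) * (M t - m t)); [exact Ht|].
    apply Rmult_le_compat_l; [lra|exact IH]. }
  assert (Hm_up : forall t s, (t <= s)%nat -> m t <= m s)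
    by (intros t s Hts; induction Hts; [lra|pose proof (Hrange m0); lra]).
  assert (HM_down : forall t s, (t <= s)%nat -> M s <= M t)
    by (intros t s Hts; induction Hts; [lra|pose proof (Hrange m0); lra]).
  assert (Hbelow : forall s t, m s <= M t).
  { intros s t. pose proof (minS_le_maxS n (z (Nat.max s t))).
    pose proof (Hm_up s (Nat.max s t) ltac:(lia)).
    pose proof (HM_down t (Nat.max s t) ltac:(lia)). unfold m, M in *. lra. }
  assert (Hgrow : Un_growing m) by (intros t; apply Hrange).
  assert (Hbnd : has_ub m) by (exists (M O); intros _ [t ->]; apply Hbelow).
  exists (proj1_sig (growing_cv m Hgrow Hbnd)).
  destruct (growing_cv m Hgrow Hbnd) as [c Hc]; simpl.
  intros t i Hi.
  pose proof (growing_ineq m c Hgrow Hc t).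
  pose proof (Rle_cv_lim (fun s => Hbelow s t) Hc (Un_cv_const (M t))).
  pose proof (minS_le n (z t) i Hi). pose proof (maxS_ge n (z t) i Hi).
  pose proof (Hgap t). unfold m, M in *.
  apply Rabs_le; lra.
Qed.

Lemma Un_cv_geometric_bound (u : nat -> R) C q :
  0 <= q < 1 -> (forall t, 0 <= u t <= C * q ^ t) -> Un_cv u 0.
Proof.
  intros Hq Hu eps Heps.
  assert (HC : 0 <= C) by (specialize (Hu O); simpl in Hu; lra).
  destruct (pow_lt_1_zero q ltac:(rewrite Rabs_pos_eq; lra) (eps / (C + 1)))
    as [T HT]; [apply Rdiv_lt_0_compat; lra|].
  exists T. intros t Ht. specialize (HT t Ht). specialize (Hu t).
  rewrite Rabs_pos_eq in HT by (apply pow_le; lra).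
  assert (Hsmall : (C + 1) * q ^ t < eps).
  { replace eps with ((C + 1) * (eps / (C + 1))) by (field; lra).
    apply Rmult_lt_compat_l; lra. }
  unfold R_dist. rewrite Rminus_0_r, Rabs_pos_eq by lra.
  assert (0 <= q ^ t) by (apply pow_le; lra). nra.
Qed.

Lemma sq_le_of_abs_le x e : Rabs x <= e -> x ^ 2 <= e ^ 2.
Proof. intros H. rewrite <- pow2_abs. apply pow_incr. split; [apply Rabs_pos|exact H]. Qed.

Lemma vector_consensus p n d (Y : nat -> nat -> vec) :
  0 < d <= 1 ->
  (forall t k, averaging_step n d (fun i => Y t i k) (fun i => Y (S t) i k)) ->
  exists c : vec, forall i, (i < S n)%nat -> Un_cv (fun t => norm p (vsub (Y t i) c)) 0.
Proof.
  intros Hd Hstep.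
  set (gap := fun k => maxS n (fun i => Y O i k) - minS n (fun i => Y O i k)).
  set (B := sumN p gap).
  assert (Hgap : forall k, 0 <= gap k) by (intros k; pose proof (minS_le_maxS n (fun i => Y O i k)); unfold gap; lra).
  assert (HgapB : forall k, (k < p)%nat -> gap k <= B)
    by (intros k Hk; apply sumN_term_le; [intros; apply Hgap|exact Hk]).
  exists (fun k => proj1_sig (scalar_consensus n d (fun t i => Y t i k) Hd (fun t => Hstep t k))).
  intros i Hi.
  apply (Un_cv_geometric_bound _ (sqrt (INR p) * B) (1 - d)); [lra|]. intros t.
  split; [apply sqrt_pos|].
  assert (Hqt : 0 <= (1 - d) ^ t) by (apply pow_le; lra).
  rewrite Rmult_assoc, Rmult_comm with (r1 := B), <- (sqrt_pow2 ((1 - d) ^ t * B))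
    by (apply Rmult_le_pos; [exact Hqt|apply sumN_nonneg; auto]).
  rewrite <- sqrt_mult_alt by apply pos_INR. apply sqrt_le_1_alt.
  rewrite <- sumN_const. apply sumN_le; intros k Hk. unfold vsub.
  destruct (scalar_consensus n d (fun t i => Y t i k) Hd (fun t => Hstep t k)) as [c Hc]; simpl.
  apply sq_le_of_abs_le. eapply Rle_trans; [apply (Hc t i Hi)|].
  apply Rmult_le_compat_l; [exact Hqt|apply HgapB; exact Hk].
Qed.

Lemma maxN_ge n g j : (j < n)%nat -> g j <= Defs.maxN n g.
Proof.
  induction n as [|n IH]; intros Hj; simpl; [lia|].
  destruct (Nat.eq_dec j n) as [->|Hne]; [apply Rmax_r|].
  eapply Rle_trans; [apply IH; lia|apply Rmax_l].
Qed.

Lemma maxN_nonneg n g : 0 <= Defs.maxN n g.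
Proof. induction n as [|n IH]; simpl; [lra|]. eapply Rle_trans; [exact IH|apply Rmax_l]. Qed.

Lemma sqdist_nonneg p u v : 0 <= sqdist p u v.
Proof. apply sumN_nonneg; intros; apply pow2_ge_0. Qed.

Lemma sqdist_le_rM p N (x : nat -> vec) j l :
  (j < N)%nat -> (l < N)%nat -> sqdist p (x j) (x l) <= rM p N x ^ 2.
Proof.
  intros Hj Hl.
  assert (Hnorm : sqrt (sqdist p (x j) (x l)) <= rM p N x).
  { rewrite <- norm_vsub. unfold rM.
    eapply Rle_trans; [|apply (maxN_ge N _ j Hj)].
    exact (maxN_ge N (fun l => norm p (vsub (x j) (x l))) l Hl). }
  rewrite <- (sqrt_sqrt (sqdist p (x j) (x l))) by apply sqdist_nonneg.
  pose proof (sqrt_pos (sqdist p (x j) (x l))). nra.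
Qed.

Lemma kernel_floor p phi (u v : vec) r :
  (forall a, 0 <= a -> 0 <= phi a <= 1) ->
  (forall a b, 0 <= a -> a <= b -> phi b <= phi a) ->
  0 <= r -> sqdist p u v <= r ^ 2 ->
  phi r <= kernel p phi (vsub u v) <= 1.
Proof.
  intros Hrange Hmono Hr Hd. unfold kernel. rewrite norm_vsub.
  assert (Hn : sqrt (sqdist p u v) <= r)
    by (rewrite <- (sqrt_pow2 r Hr); apply sqrt_le_1_alt; exact Hd).
  split; [apply Hmono; [apply sqrt_pos|exact Hn]|apply Hrange, sqrt_pos].
Qed.

Lemma normalized_weights_ge n (K w : nat -> R) f0 :
  0 < f0 -> (forall j, (j < S n)%nat -> f0 <= K j <= 1) ->
  (forall j, (j < S n)%nat -> 0 < w j) ->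
  weights_ge (S n) (f0 * minS n w / sumN (S n) w)
    (fun j => K j * w j / sumN (S n) (fun l => K l * w l)).
Proof.
  intros Hf0 HK Hw.
  set (Z := sumN (S n) (fun l => K l * w l)). set (W := sumN (S n) w).
  assert (HKw : forall j, (j < S n)%nat -> 0 <= K j * w j).
  { intros j Hj. specialize (HK j Hj). specialize (Hw j Hj). nra. }
  assert (HZ : 0 < Z).
  { apply Rlt_le_trans with (K O * w O); [|apply (sumN_term_le _ _ O HKw); lia].
    specialize (HK O ltac:(lia)). specialize (Hw O ltac:(lia)). nra. }
  assert (HZW : Z <= W).
  { apply sumN_le; intros j Hj. specialize (HK j Hj). specialize (Hw j Hj). nra. }
  split.
  - intros j Hj. pose proof (HK j Hj). pose proof (Hw j Hj).
    destruct (minS_attained n w) as [j0 [Hj0 Emin]].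
    pose proof (minS_le n w j Hj) as Hmin. rewrite Emin in Hmin |- *.
    pose proof (Hw j0 Hj0). unfold Rdiv. fold W.
    apply Rmult_le_compat; [nra|left; apply Rinv_0_lt_compat; lra|nra|].
    apply Rinv_le_contravar; lra.
  - unfold Rdiv. rewrite (sumN_ext _ _ (fun j => / Z * (K j * w j))) by (intros; ring).
    rewrite sumN_scal. fold Z. field. lra.
Qed.

Lemma bms_succ p N w phi x t i k :
  bms p N w phi x (S t) i k =
  sumN N (fun j => kernel p phi (vsub (bms p N w phi x t i) (bms p N w phi x t j))
                   * w j * bms p N w phi x t j k) /
  sumN N (fun j => kernel p phi (vsub (bms p N w phi x t i) (bms p N w phi x t j)) * w j).
Proof. reflexivity. Qed.

Section BlurringMeanShift.

Variables (p n : nat) (w : nat -> R) (phi : R -> R) (x : nat -> vec).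
Hypothesis w_pos : forall j, (j < S n)%nat -> 0 < w j.
Hypothesis phi_range : forall a, 0 <= a -> 0 <= phi a <= 1.
Hypothesis phi_mono : forall a b, 0 <= a -> a <= b -> phi b <= phi a.
Hypothesis phi_rM_pos : 0 < phi (rM p (S n) x).

Let Y := bms p (S n) w phi x.
Let r := rM p (S n) x.

(* The uniform lower bound on all normalized kernel weights. *)
Definition weight_floor : R := phi r * minS n w / sumN (S n) w.

Lemma weight_floor_bounds : 0 < weight_floor <= 1.
Proof.
  assert (HW0 : 0 < w O) by (apply w_pos; lia).
  assert (HwW : w O <= sumN (S n) w)
    by (apply (sumN_term_le _ _ O); [intros j Hj; left; apply w_pos|]; lia).
  destruct (minS_attained n w) as [j0 [Hj0 Emin]].
  pose proof (minS_le n w O ltac:(lia)). pose proof (w_pos j0 Hj0).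
  pose proof (phi_range r (maxN_nonneg _ _)). fold r in phi_rM_pos.
  unfold weight_floor. rewrite Emin in *. split.
  - apply Rdiv_lt_0_compat; [apply Rmult_lt_0_compat|]; lra.
  - apply Rmult_le_reg_r with (sumN (S n) w); [lra|].
    unfold Rdiv. rewrite Rmult_assoc, Rinv_l, Rmult_1_l by lra. nra.
Qed.

Lemma bms_step_barycenter t :
  (forall j l, (j < S n)%nat -> (l < S n)%nat -> sqdist p (Y t j) (Y t l) <= r ^ 2) ->
  forall i, (i < S n)%nat -> exists a, weights_ge (S n) weight_floor a /\
    forall k, Y (S t) i k = vavg (S n) a (Y t) k.
Proof.
  intros Hdiam i Hi.
  set (K := fun j => kernel p phi (vsub (Y t i) (Y t j))).
  exists (fun j => K j * w j / sumN (S n) (fun l => K l * w l)). split.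
  - apply normalized_weights_ge; [exact phi_rM_pos| |exact w_pos].
    intros j Hj. apply kernel_floor; auto. apply maxN_nonneg.
  - intros k. unfold Y; rewrite bms_succ; fold Y.
    unfold vavg, wsum, Rdiv. rewrite Rmult_comm, <- sumN_scal.
    apply sumN_ext; intros j _. unfold K. ring.
Qed.

Lemma bms_diameter t :
  forall j l, (j < S n)%nat -> (l < S n)%nat -> sqdist p (Y t j) (Y t l) <= r ^ 2.
Proof.
  induction t as [|t IH]; intros j l Hj Hl; [apply sqdist_le_rM; assumption|].
  pose proof (proj1 weight_floor_bounds).
  destruct (bms_step_barycenter t IH j Hj) as [a [Ha Ea]].
  destruct (bms_step_barycenter t IH l Hl) as [b [Hb Eb]].
  unfold sqdist. rewrite (sumN_ext p _ (fun k => (vavg (S n) a (Y t) k - vavg (S n) b (Y t) k) ^ 2))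
    by (intros k _; rewrite Ea, Eb; reflexivity).
  apply vavg_sqdist_le; [apply (weights_ge_nonneg _ weight_floor); auto; lra ..|exact IH].
Qed.

Lemma bms_consensus :
  exists c : vec, forall i, (i < S n)%nat -> Un_cv (fun t => norm p (vsub (Y t i) c)) 0.
Proof.
  apply (vector_consensus p n weight_floor); [exact weight_floor_bounds|].
  intros t k i Hi.
  destruct (bms_step_barycenter t (bms_diameter t) i Hi) as [a [Ha Ea]].
  exists a; split; [exact Ha|apply Ea].
Qed.

End BlurringMeanShift.

Theorem corollary1 (p N : nat) (x : nat -> vec) (w : nat -> R) (phi : R -> R)
    (hw : forall j, (j < N)%nat -> 0 < w j)
    (hf : PDD p phi)
    (hpos : 0 < phi (rM p N x)) :
  exists c : vec,
    forall i, (i < N)%nat ->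
      Un_cv (fun t => norm p (vsub (bms p N w phi x t i) c)) 0.
Proof.
  destruct N as [|n].
  - exists (fun _ => 0). intros i Hi. lia.
  - destruct hf as [phi_range [phi_mono _]].
    exact (bms_consensus p n w phi x hw phi_range phi_mono hpos).
Qed.
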